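(* Let $T^{\natural}=(S^{\natural},I^{\natural},R^{\natural},V^{\natural})$ be an infinite-state transition system, $\varphi$ a set of predicates with $V(\varphi)\subseteq V^{\natural}_{int}$, and $T^{\sharp}=(S^{\sharp},I^{\sharp},R^{\sharp},V^{\sharp})$ the partially predicate abstracted transition system defined in the context. For every ACTL formula $f^{\sharp}$ over the variables of $T^{\sharp}$, if $T^{\sharp}\models f^{\sharp}$ then $T^{\natural}\models\gamma(f^{\sharp})$.
   Context: A transition system $T=(S,I,R,V)$ has variables $V=V_{bool}\cup V_{int}$, states $S\subseteq\mathcal{B}^{|V_{bool}|}\times\mathcal{Z}^{|V_{int}|}$, initial states $I\subseteq S$, transition relation $R\subseteq S\times S$; $T\models f$ means every initial state satisfies $f$. ACTL is the universal fragment of CTL. Given predicates $\varphi=\{\varphi_1,\dots,\varphi_n\}$ over integer variables, $V(\varphi)$ is the set of their variables, $\varphi_i'$ their primed (next-state) versions; fresh booleans $b_i,b_i'$ stand for $\varphi_i,\varphi_i'$. $\alpha(s)=\exists V(\varphi).(s\wedge\bigwedge_i(\varphi_i\iff b_i))$; with $CS=\bigwedge_i\big((\bigwedge_{v\in V(\varphi_i)}v'=v)\implies(b_i'\iff b_i)\big)$, $\alpha^{\tau}(r)=\exists V(\varphi).\exists V(\varphi').\big(r\wedge CS\wedge\bigwedge_i(\varphi_i\iff b_i)\wedge\bigwedge_i(\varphi_i'\iff b_i')\big)$. $T^{\sharp}$ has variables $V^{\sharp}=(V^{\natural}\cup\{b_i\})\setminus V(\varphi)$, $S^{\sharp}=\bigcup_{s\in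 S^{\natural}}\alpha(s)$, $I^{\sharp}=\bigcup_{s\in I^{\natural}}\alpha(s)$, $R^{\sharp}=\bigcup_{r\in R^{\natural}}\alpha^{\tau}(r)$. For a state formula $a$ over $V^{\sharp}$, $\gamma(a)=a[\bar\varphi/\bar b]$ (replace each $b_i$ by $\varphi_i$); for a temporal formula $f^{\sharp}$, $\gamma(f^{\sharp})$ is obtained by recursively replacing every atomic subformula $a$ of $f^{\sharp}$ by $\gamma(a)$, keeping the temporal and boolean structure. *)

From HB Require Import structures.
From mathcomp Require Import all_boot all_order all_algebra.
Unset Printing Implicit Defensive.

(* Boolean variables are indexed by the finite type VB, integer variables by
   the finite type VI; a concrete state assigns a boolean to each boolean
   variable and an integer to each integer variable. *)
Definition cstate (VB VI : finType) : Type :=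
  ({ffun VB -> bool} * {ffun VI -> int})%type.

Definition Vphi {VI : finType} {n : nat} (Vars : 'I_n -> {set VI}) : {set VI} :=
  \bigcup_(i < n) Vars i.

(* Abstract state over V# = (V \cup {b_i}) \ V(phi): the boolean variables,
   the fresh booleans b_0..b_{n-1}, and the integer variables outside V(phi). *)
Definition astate (VB : finType) {VI : finType} {n : nat} (Vars : 'I_n -> {set VI}) : Type :=
  ({ffun VB -> bool} * {ffun 'I_n -> bool}
   * {ffun {v : VI | v \notin Vphi Vars} -> int})%type.

(* The abstract state obtained from a concrete state s: b_i := phi_i(s), and
   the variables of V(phi) are projected away (existential quantification). *)
Definition abs_state {VB VI : finType} {n : nat}
  (phi : 'I_n -> {ffun VI -> int} -> bool) (Vars : 'I_n -> {set VI})
  (s : cstate VB VI) : astate VB Vars :=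
  (s.1, [ffun i => phi i s.2], [ffun v => s.2 (val v)]).

Record TS (St : Type) := mkTS {
  tsS : St -> Prop;
  tsI : St -> Prop;
  tsR : St -> St -> Prop }.
Arguments mkTS {St}.
Arguments tsS {St}.
Arguments tsI {St}.
Arguments tsR {St}.

Definition alpha {VB VI : finType} {n : nat}
  (phi : 'I_n -> {ffun VI -> int} -> bool) (Vars : 'I_n -> {set VI})
  (s : cstate VB VI) (a : astate VB Vars) : Prop :=
  a = abs_state phi Vars s.

Definition alpha_tau {VB VI : finType} {n : nat}
  (phi : 'I_n -> {ffun VI -> int} -> bool) (Vars : 'I_n -> {set VI})
  (s s' : cstate VB VI) (a a' : astate VB Vars) : Prop :=
  a = abs_state phi Vars s /\ a' = abs_state phi Vars s' /\
  (forall i : 'I_n, (forall v, v \in Vars i -> s'.2 v = s.2 v) ->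
     (a'.1.2 i = a.1.2 i)).

Definition abs_TS {VB VI : finType} {n : nat}
  (phi : 'I_n -> {ffun VI -> int} -> bool) (Vars : 'I_n -> {set VI})
  (T : TS (cstate VB VI)) : TS (astate VB Vars) :=
  mkTS (fun a => exists s, tsS T s /\ alpha phi Vars s a)
       (fun a => exists s, tsI T s /\ alpha phi Vars s a)
       (fun a a' => exists s s', tsR T s s' /\ alpha_tau phi Vars s s' a a').

(* ACTL formulas (negation normal form; negation only on atomic state
   formulas). Atomic state formulas over the state type St are represented
   by their denotation St -> bool. *)
Inductive actl (St : Type) : Type :=
| ATrue | AFalse
| Atom of (St -> bool)
| NAtom of (St -> bool)
| AAnd of actl St & actl St
| AOr of actl St & actl St
| AX of actl St
| AF of actl St
| AG of actl St
| AU of actl St & actl St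
| AR of actl St & actl St.
Arguments ATrue {St}.
Arguments AFalse {St}.
Arguments Atom {St}.
Arguments NAtom {St}.
Arguments AAnd {St}.
Arguments AOr {St}.
Arguments AX {St}.
Arguments AF {St}.
Arguments AG {St}.
Arguments AU {St}.
Arguments AR {St}.

Definition is_path {St : Type} (R : St -> St -> Prop) (p : nat -> St) : Prop :=
  forall k, R (p k) (p k.+1).

Fixpoint sat {St : Type} (R : St -> St -> Prop) (f : actl St) (s : St) : Prop :=
  match f with
  | ATrue => True
  | AFalse => False
  | Atom a => a s
  | NAtom a => ~~ a s
  | AAnd f g => sat R f s /\ sat R g s
  | AOr f g => sat R f s \/ sat R g s
  | AX f => forall p, p 0 = s -> is_path R p -> sat R f (p 1)
  | AF f => forall p, p 0 = s -> is_path R p -> exists k, sat R f (p k)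
  | AG f => forall p, p 0 = s -> is_path R p -> forall k, sat R f (p k)
  | AU f g => forall p, p 0 = s -> is_path R p ->
      exists k, sat R g (p k) /\ forall j, j < k -> sat R f (p j)
  | AR f g => forall p, p 0 = s -> is_path R p ->
      forall k, sat R g (p k) \/ exists2 j, j < k & sat R f (p j)
  end.

Definition models {St : Type} (T : TS St) (f : actl St) : Prop :=
  forall s, tsI T s -> sat (tsR T) f s.

(* gamma on atomic state formulas: substitute phi_i for b_i. *)
Definition gamma_atom {VB VI : finType} {n : nat}
  (phi : 'I_n -> {ffun VI -> int} -> bool) (Vars : 'I_n -> {set VI})
  (a : astate VB Vars -> bool) : cstate VB VI -> bool :=
  fun s => a (abs_state phi Vars s).

Fixpoint gamma {VB VI : finType} {n : nat}
  (phi : 'I_n -> {ffun VI -> int} -> bool) (Vars : 'I_n -> {set VI})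
  (f : actl (astate VB Vars)) : actl (cstate VB VI) :=
  match f with
  | ATrue => ATrue
  | AFalse => AFalse
  | Atom a => Atom (gamma_atom phi Vars a)
  | NAtom a => NAtom (gamma_atom phi Vars a)
  | AAnd f g => AAnd (gamma phi Vars f) (gamma phi Vars g)
  | AOr f g => AOr (gamma phi Vars f) (gamma phi Vars g)
  | AX f => AX (gamma phi Vars f)
  | AF f => AF (gamma phi Vars f)
  | AG f => AG (gamma phi Vars f)
  | AU f g => AU (gamma phi Vars f) (gamma phi Vars g)
  | AR f g => AR (gamma phi Vars f) (gamma phi Vars g)
  end.

From mathcomp Require Import all_boot all_order all_algebra.

(* The abstraction map s |-> alpha(s) is a simulation of T by T#: every
   concrete path maps to an abstract path (the constraint CS holds because
   phi_i depends only on V(phi_i)), and gamma f is f with its atoms pulled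
   back along that map.  Universal path quantifiers in ACTL are therefore
   preserved backwards. *)

Section Simulation.

Variables (St St' : Type) (h : St -> St').

Fixpoint actl_comap (f : actl St') : actl St :=
  match f with
  | ATrue => ATrue
  | AFalse => AFalse
  | Atom a => Atom (fun s => a (h s))
  | NAtom a => NAtom (fun s => a (h s))
  | AAnd f g => AAnd (actl_comap f) (actl_comap g)
  | AOr f g => AOr (actl_comap f) (actl_comap g)
  | AX f => AX (actl_comap f)
  | AF f => AF (actl_comap f)
  | AG f => AG (actl_comap f)
  | AU f g => AU (actl_comap f) (actl_comap g)
  | AR f g => AR (actl_comap f) (actl_comap g)
  end.

Variables (R : St -> St -> Prop) (R' : St' -> St' -> Prop).
Hypothesis h_step : forall s s', R s s' -> R' (h s) (h s').

Lemma is_path_comp {p : nat -> St} : is_path R p -> is_path R' (h \o p).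
Proof. by move=> Rp k; apply: h_step. Qed.

Lemma sat_comap (f : actl St') (s : St) :
  sat R' f (h s) -> sat R (actl_comap f) s.
Proof.
elim: f s => [||a|a|f IHf g IHg|f IHf g IHg|f IHf|f IHf|f IHf|f IHf g IHg|f IHf g IHg]
  s //=.
- by case=> /IHf ? /IHg ?.
- by case=> [/IHf|/IHg]; [left|right].
all: move=> sat_h p p0 Rp; have := sat_h (h \o p) (congr1 h p0) (is_path_comp Rp).
- exact: IHf.
- by case=> k /IHf; exists k.
- by move=> fk k; apply/IHf/fk.
- by case=> k [/IHg gk fj]; exists k; split=> // j /fj /IHf.
- move=> gf k; case: (gf k) => [/IHg|[j ltjk /IHf]]; first by left.
  by right; exists j.
Qed.

End Simulation.

Arguments actl_comap {St St'} h f.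

Lemma models_comap (St St' : Type) (h : St -> St') (T : TS St) (T' : TS St')
    (f : actl St') :
  (forall s, tsI T s -> tsI T' (h s)) ->
  (forall s s', tsR T s s' -> tsR T' (h s) (h s')) ->
  models T' f -> models T (actl_comap h f).
Proof. by move=> h_init h_step T'f s /h_init /T'f; apply: sat_comap. Qed.

Section PredicateAbstraction.

Variables (VB VI : finType) (n : nat).
Variables (phi : 'I_n -> {ffun VI -> int} -> bool) (Vars : 'I_n -> {set VI}).

Lemma gamma_comap (f : actl (astate VB Vars)) :
  gamma phi Vars f = actl_comap (abs_state phi Vars) f.
Proof. by elim: f => //= f -> // g ->. Qed.

Lemma abs_TS_init (T : TS (cstate VB VI)) (s : cstate VB VI) :
  tsI T s -> tsI (abs_TS phi Vars T) (abs_state phi Vars s).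
Proof. by exists s. Qed.

Hypothesis phi_dep : forall (i : 'I_n) (x y : {ffun VI -> int}),
  (forall v, v \in Vars i -> x v = y v) -> phi i x = phi i y.

Lemma abs_TS_step (T : TS (cstate VB VI)) (s s' : cstate VB VI) :
  tsR T s s' ->
  tsR (abs_TS phi Vars T) (abs_state phi Vars s) (abs_state phi Vars s').
Proof.
move=> Tss'; exists s, s'; do 3!split=> //.
by move=> i same_Vars /=; rewrite !ffunE; apply: phi_dep.
Qed.

End PredicateAbstraction.

Theorem lemma7 (VB VI : finType) (n : nat)
  (phi : 'I_n -> {ffun VI -> int} -> bool) (Vars : 'I_n -> {set VI})
  (Hdep : forall (i : 'I_n) (x y : {ffun VI -> int}),
      (forall v, v \in Vars i -> x v = y v) -> phi i x = phi i y)
  (T : TS (cstate VB VI))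
  (HI : forall s, tsI T s -> tsS T s)
  (HR : forall s s', tsR T s s' -> tsS T s /\ tsS T s')
  (f : actl (astate VB Vars)) :
  models (abs_TS phi Vars T) f -> models T (gamma phi Vars f).
Proof.
rewrite gamma_comap; apply: models_comap.
- exact: abs_TS_init.
- exact: abs_TS_step.
Qed.
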